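(* Let $2 \leq k \leq n-2$ be integers, let $F$ be a finite field, and let $E \subset F^n$ be an $(n,k)$ set. Then $\lvert E \rvert \gtrapprox \lvert F \rvert^{\frac{kn+k+1}{k+1}}$; that is, for every $\epsilon>0$ there is a constant $C_\epsilon>0$ independent of $F$ and $E$ such that $\lvert E\rvert \geq C_\epsilon^{-1}\lvert F\rvert^{\frac{kn+k+1}{k+1}-\epsilon}$.
   Context: A set $E\subset F^n$ is an $(n,k)$ set if for every $k$-dimensional linear subspace $\pi$ of $F^n$ there is $x\in F^n$ with $x+\pi\subset E$. $\lvert\cdot\rvert$ denotes cardinality. *)

From HB Require Import structures.
From mathcomp Require Import all_boot all_order all_algebra all_field.

Set Implicit Arguments.
Unset Strict Implicit.
Unset Printing Implicit Defensive.
Import GRing.Theory.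

Definition nk_set (F : finFieldType) (n k : nat) (E : {set 'rV[F]_n}) : Prop :=
  forall V : {vspace 'rV[F]_n}, \dim V = k ->
    exists x : 'rV[F]_n, forall y : 'rV[F]_n, y \in V -> (x + y)%R \in E.

(* Dvir's polynomial method.  An (n,k) set E with k >= 1 contains a line in
   every direction.  If |E| < m^n, some nonzero polynomial P of degree < m in
   each variable vanishes on E; choosing m about q/n makes its total degree d
   smaller than q - 1.  On a line x + F v inside E, P restricts to a polynomial
   of degree <= d vanishing identically, which forces the degree-d homogeneous
   part of P to vanish at v.  This part thus vanishes on all of F^n, and since
   its degree in each variable is below q - 1, orthogonality of the power sums
   over F makes it zero, a contradiction.  Hence |E| >= (q/2n)^n, and this
   exceeds the claimed bound because (kn+k+1)/(k+1) <= n. *)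

From HB Require Import structures.
From mathcomp Require Import all_boot all_order all_algebra all_field.
From mathcomp Require Import fingroup cyclic zify ring.

Set Implicit Arguments.
Unset Strict Implicit.
Unset Printing Implicit Defensive.
Import GRing.Theory FinRing.Theory.

Section PowerSums.
Variable F : finFieldType.
Local Notation q := #|F|.
Local Open Scope ring_scope.

Lemma natr_card_finField : q%:R = 0 :> F.
Proof. by rewrite -cardsT -zmodXgE expg_cardG ?inE. Qed.

Lemma expf_card_pred (t : F) : t != 0 -> t ^+ q.-1 = 1.
Proof.
move=> t0; apply: (mulfI t0).
by rewrite -exprS prednK ?expf_card ?mulr1 // (ltn_trans _ (finNzRing_gt1 F)).
Qed.

Lemma sum_expr_eq0 j : (0 < j < q.-1)%N -> \sum_(t : F) t ^+ j = 0.
Proof.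
case/andP=> j_gt0 j_lt.
have [a a0 aj] : exists2 a : F, a != 0 & a ^+ j != 1.
  have : ~~ all j.-unity_root (enum (predC1 (0 : F))).
    apply: contraL j_lt => /max_unity_roots/(_ (enum_uniq _)).
    by rewrite -cardE cardC1 -leqNgt; apply.
  by case/allPn=> a; rewrite mem_enum unity_rootE; exists a.
have /eqP : \sum_(t : F) t ^+ j = a ^+ j * \sum_(t : F) t ^+ j.
  rewrite mulr_sumr (reindex_inj (mulfI a0)) /=.
  by apply: eq_bigr => t _; rewrite exprMn.
rewrite -subr_eq0 -{1}[\sum__ _]mul1r -mulrBl mulf_eq0 subr_eq0 eq_sym.
by rewrite (negbTE aj) => /eqP.
Qed.

Lemma sum_expr_finField j : (0 < j)%N ->
  \sum_(t : F) t ^+ j = if (q.-1 %| j)%N then -1 else 0.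
Proof.
move=> j_gt0; have q_gt1 : (1 < #|F|)%N := finNzRing_gt1 F.
have expr_mod (t : F) : t != 0 -> t ^+ j = t ^+ (j %% q.-1).
  move=> t0; rewrite {1}(divn_eq j q.-1) exprD.
  by rewrite mulnC exprM expf_card_pred ?expr1n ?mul1r.
rewrite (bigD1 0) //= expr0n eqn0Ngt j_gt0 add0r.
case: ifP => [/eqP dvd_j | ndvd_j].
  rewrite (eq_bigr (fun=> 1)) => [|t t0]; last by rewrite expr_mod // dvd_j expr0.
  apply/eqP; rewrite sumr_const cardC1 -subr_eq0 opprK natr1 prednK 1?ltnW //.
  by rewrite natr_card_finField.
rewrite (eq_bigr (fun t : F => t ^+ (j %% q.-1))) => [|t t0]; last exact: expr_mod.
have mod_gt0 : (0 < j %% q.-1)%N by rewrite lt0n; move: ndvd_j => /negbT.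
transitivity (\sum_(t : F) t ^+ (j %% q.-1)).
  by rewrite [in RHS](bigD1 0) //= expr0n eqn0Ngt mod_gt0 add0r.
by rewrite sum_expr_eq0 // mod_gt0 ltn_pmod // ltn_predRL.
Qed.

End PowerSums.

Lemma dvdn_add_subn d a b :
  (a < d)%N -> (b < d)%N -> (d %| a + (d - b))%N = (a == b).
Proof.
move=> a_lt b_lt; apply/idP/eqP => [/dvdnP [c def_c] | ->].
  by case: c def_c => [|[|c]]; rewrite ?mulSn; lia.
by rewrite subnKC ?dvdnn // ltnW.
Qed.

Section Polynomials.
Variables (F : finFieldType) (n m : nat).
Local Notation q := #|F|.
Local Open Scope ring_scope.

Definition mdeg (a : {ffun 'I_n -> 'I_m}) : nat := (\sum_l a l)%N.

(* A polynomial on F^n of degree < m in each variable is given by its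
   coefficients [c a] on the exponent vectors [a]. *)
Definition meval (c : {ffun 'I_n -> 'I_m} -> F) (x : 'rV[F]_n) : F :=
  \sum_a c a * \prod_l x 0 l ^+ a l.

Definition homog_part (c : {ffun 'I_n -> 'I_m} -> F) (d : nat) a : F :=
  if mdeg a == d then c a else 0.

Lemma mdeg_le a : (mdeg a <= n * m.-1)%N.
Proof.
rewrite /mdeg -[n in (n * _)%N]card_ord -sum_nat_const leq_sum // => l _.
by rewrite -ltnS (leq_trans (ltn_ord _)) // leqSpred.
Qed.

Lemma sum_row_prod_expr (j : 'I_n -> nat) :
  \sum_(x : 'rV[F]_n) \prod_l x 0 l ^+ j l = \prod_l \sum_(t : F) t ^+ j l.
Proof.
rewrite bigA_distr_bigA (reindex (fun g : {ffun 'I_n -> F} => \row_l g l)) /=.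
  by apply: eq_bigr => g _; apply: eq_bigr => l _; rewrite mxE.
exists (fun x : 'rV[F]_n => [ffun l => x 0 l]) => [g _ | x _].
  by apply/ffunP => l; rewrite ffunE mxE.
by apply/rowP => l; rewrite !mxE ffunE.
Qed.

Lemma meval_eq0_coef (c : {ffun 'I_n -> 'I_m} -> F) :
  (m <= q.-1)%N -> (forall x, meval c x = 0) -> forall a, c a = 0.
Proof.
move=> m_le c_eq0 b.
have exp_lt (a : {ffun 'I_n -> 'I_m}) l : (a l < q.-1)%N by apply: leq_trans m_le.
have sum_mono (a : {ffun 'I_n -> 'I_m}) :
    \sum_(x : 'rV[F]_n) \prod_l x 0 l ^+ (a l + (q.-1 - b l))%N
    = if a == b then (-1) ^+ n else 0.
  rewrite sum_row_prod_expr.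
  under eq_bigr => l _ do rewrite sum_expr_finField ?addn_gt0 ?subn_gt0 ?exp_lt ?orbT //
                                  dvdn_add_subn ?exp_lt //.
  case: eqP => [-> | /eqP neq_ab].
    by rewrite (eq_bigr (fun=> -1)) ?prodr_const ?card_ord // => l _; rewrite eqxx.
  have [l neq_l] : exists l, a l != b l.
    apply/existsP; apply: contraNT neq_ab => /existsPn eq_ab.
    by apply/eqP/ffunP => l; apply/eqP/negPn/eq_ab.
  by rewrite (bigD1 l) //= val_eqE (negbTE neq_l) mul0r.
(* Pair [meval c] with the complementary monomial of [b], sum over F^n. *)
have : \sum_(x : 'rV[F]_n) meval c x * \prod_l x 0 l ^+ (q.-1 - b l) = 0.
  by apply: big1 => x _; rewrite c_eq0 mul0r.
rewrite (eq_bigr (fun x : 'rV[F]_n =>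
    \sum_a c a * \prod_l x 0 l ^+ (a l + (q.-1 - b l))%N)); last first.
  move=> x _; rewrite mulr_suml; apply: eq_bigr => a _.
  by rewrite -mulrA -big_split; congr (_ * _); apply: eq_bigr => l _; rewrite exprD.
rewrite exchange_big /=.
under eq_bigr => a _ do rewrite -mulr_sumr sum_mono.
rewrite (bigD1 b) //= eqxx big1 ?addr0 => [/eqP | a /negbTE ->]; last by rewrite mulr0.
by rewrite mulf_eq0 signr_eq0 orbF => /eqP.
Qed.

Definition line_poly (x v : 'rV[F]_n) (a : {ffun 'I_n -> 'I_m}) : {poly F} :=
  \prod_l (x 0 l *: 'X + (v 0 l)%:P) ^+ a l.

Lemma size_line_poly x v a : (size (line_poly x v a) <= (mdeg a).+1)%N.
Proof.
apply: (big_rec2 (fun s (p : {poly F}) => (size p <= s.+1)%N)) => [|l s p _ size_p].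
  by rewrite size_poly1.
have size_lin (b e : F) : (size (b *: 'X + e%:P)%R <= 2)%N.
  rewrite (leq_trans (size_polyD _ _)) // geq_max size_polyC (leq_trans (leq_b1 _)) //.
  by rewrite (leq_trans (size_scale_leq _ _)) ?size_polyX.
have := size_poly_exp_leq (x 0 l *: 'X + (v 0 l)%:P) (a l).
have := size_polyMleq ((x 0 l *: 'X + (v 0 l)%:P) ^+ a l) p.
move: (size_lin (x 0 l) (v 0 l)) size_p.
set lin := (x 0 l *: 'X + _)%R; set y := size (lin ^+ a l)%R; set z := size (_ * p)%R.
nia.
Qed.

Lemma horner_line_poly x v a (t : F) : t != 0 ->
  (line_poly x v a).[t] = t ^+ mdeg a * \prod_l (x + t^-1 *: v) 0 l ^+ a l.
Proof.
move=> t0; rewrite horner_prod /mdeg -prodrXr -big_split /=; apply: eq_bigr => l _.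
rewrite horner_exp hornerD hornerZ hornerX hornerC !mxE -exprMn; congr (_ ^+ _).
by rewrite mulrDr mulrA mulfV // mul1r mulrC.
Qed.

Lemma horner0_line_poly x v a : (line_poly x v a).[0] = \prod_l v 0 l ^+ a l.
Proof.
rewrite horner_prod; apply: eq_bigr => l _.
by rewrite horner_exp hornerD hornerZ hornerX hornerC mulr0 add0r.
Qed.

Lemma meval_homog_line c d x v : (d < q.-1)%N ->
  (forall a, c a != 0 -> (mdeg a <= d)%N) ->
  (forall s, meval c (x + s *: v) = 0) -> meval (homog_part c d) v = 0.
Proof.
move=> d_lt deg_le line_eq0.
(* R.[t] = t ^+ d * meval c (x + t^-1 *: v) for t != 0, and R.[0] is the
   value at v of the degree-d part. *)
pose R := \sum_a c a *: (line_poly x v a * 'X^(d - mdeg a)).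
have size_R : (size R <= d.+1)%N.
  apply: (big_ind (fun p : {poly F} => (size p <= d.+1)%N)) => [|p r|a _].
  - by rewrite size_poly0.
  - by move=> size_p size_r; rewrite (leq_trans (size_polyD _ _)) // geq_max size_p.
  have [-> | /deg_le deg_a] := eqVneq (c a) 0; first by rewrite scale0r size_poly0.
  rewrite (leq_trans (size_scale_leq _ _)) // (leq_trans (size_polyMleq _ _)) //.
  by have := size_line_poly x v a; rewrite size_polyXn; lia.
have R_eq0 : R = 0.
  apply: (@roots_geq_poly_eq0 _ _ (enum (predC1 0))); last 2 first.
  - exact: enum_uniq.
  - by rewrite -cardE cardC1 (leq_trans size_R).
  apply/allP => t; rewrite mem_enum => t0; rewrite /root horner_sum.
  rewrite (eq_bigr (fun a => t ^+ d * (c a * \prod_l (x + t^-1 *: v) 0 l ^+ a l))).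
    by rewrite -mulr_sumr; move: (line_eq0 t^-1); rewrite /meval => ->; rewrite mulr0.
  move=> a _; have [-> | /deg_le deg_a] := eqVneq (c a) 0.
    by rewrite scale0r horner0 !mul0r mulr0.
  rewrite hornerZ hornerM horner_line_poly // hornerXn.
  by rewrite -[in RHS](subnKC deg_a) exprD; ring.
transitivity R.[0]; last by rewrite R_eq0 horner0.
rewrite horner_sum; apply: eq_bigr => a _.
rewrite hornerZ hornerM horner0_line_poly hornerXn /homog_part mulrA.
have [<- | ne_d] := eqVneq (mdeg a) d; first by rewrite subnn expr0 mulr1.
have [-> | /deg_le deg_a] := eqVneq (c a) 0; first by rewrite !mul0r.
by rewrite expr0n subn_eq0 leqNgt ltn_neqAle ne_d deg_a mulr0 mul0r.
Qed.

End Polynomials.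

Lemma exists_supv_dim (K : fieldType) (vT : vectType K) (U : {vspace vT}) j :
  (\dim U <= j <= \dim {:vT})%N -> exists2 V : {vspace vT}, (U <= V)%VS & \dim V = j.
Proof.
elim: j => [|j IHj] /andP[U_le j_le]; first by exists U => //; apply/eqP; rewrite -leqn0.
have [dimU | ne_dimU] := eqVneq (\dim U) j.+1; first by exists U.
have [V UV dimV] : exists2 V : {vspace vT}, (U <= V)%VS & \dim V = j.
  by apply: IHj; rewrite (ltnW j_le) andbT; move: U_le ne_dimU; lia.
have [w _ wV] : exists2 w, w \in fullv & w \notin V.
  by apply/subvPn; apply: contraTN j_le => /dimvS; rewrite dimV -ltnNge.
exists (<[w]> + V)%VS; first exact: subv_trans UV (addvSr _ _).
have free_wV : free (w :: vbasis V).
  by rewrite free_cons (span_basis (vbasisP V)) wV (basis_free (vbasisP V)).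
by rewrite -{1}(span_basis (vbasisP V)) -span_cons (eqP free_wV) /= size_tuple dimV.
Qed.

Section Kakeya.
Variable F : finFieldType.
Local Open Scope ring_scope.

Lemma exists_nontrivial_annihilator (I T : finType) (f : I -> T -> F) (E : {set T}) :
  (#|E| < #|I|)%N ->
  exists c : I -> F, (exists i, c i != 0) /\ forall y, y \in E -> \sum_i c i * f i y = 0.
Proof.
move=> card_lt.
pose M := \matrix_(i < #|I|, j < #|E|) f (enum_val i) (enum_val j).
pose u := nz_row (kermx M).
have u_neq0 : u != 0.
  rewrite nz_row_eq0 -mxrank_eq0 mxrank_ker subn_eq0 -ltnNge.
  exact: leq_ltn_trans (rank_leq_col M) card_lt.
have uM : u *m M = 0 by apply/sub_kermxP; apply: nz_row_sub.
exists (fun i => u 0 (enum_rank i)); split.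
  have [i ui] : exists i, u 0 i != 0.
    apply/existsP; apply: contraNT u_neq0 => /existsPn u0.
    by apply/eqP/rowP => i; rewrite mxE; apply/eqP/negPn/u0.
  by exists (enum_val i); rewrite enum_valK.
move=> y yE; transitivity ((u *m M) 0 (enum_rank_in yE y)); last by rewrite uM mxE.
rewrite mxE (reindex _ (onW_bij _ (@enum_val_bij I))) /=.
by apply: eq_bigr => i _; rewrite enum_valK mxE enum_rankK_in.
Qed.

Definition kakeya_set n (E : {set 'rV[F]_n}) : Prop :=
  forall v, exists x, forall s : F, x + s *: v \in E.

Lemma nk_set_kakeya n k (E : {set 'rV[F]_n}) :
  (0 < k <= n)%N -> nk_set k E -> kakeya_set E.
Proof.
case/andP=> k_gt0 k_le E_nk v.
have [V vV dimV] : exists2 V, (<[v]> <= V)%VS & \dim V = k.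
  apply: exists_supv_dim; rewrite dimvf dim_matrix mul1r k_le dim_vline andbT.
  exact: leq_trans (leq_b1 _) k_gt0.
have [x xV_E] := E_nk V dimV.
by exists x => s; apply: xV_E; rewrite memvZ // (subvP vV) ?memv_line.
Qed.

Theorem kakeya_set_card_ge n m (E : {set 'rV[F]_n}) :
  (0 < n)%N -> (n * m.-1 < #|F|.-1)%N -> kakeya_set E -> (m ^ n <= #|E|)%N.
Proof.
move=> n_gt0 deg_lt E_kakeya; rewrite leqNgt; apply/negP => E_small.
have m_le : (m <= #|F|.-1)%N by nia.
have [c [[a1 ca1] c_E]] := exists_nontrivial_annihilator
  (fun (a : {ffun 'I_n -> 'I_m}) (y : 'rV[F]_n) => \prod_l y 0 l ^+ a l)
  (ltac:(by rewrite card_ffun !card_ord) : (#|E| < #|{ffun 'I_n -> 'I_m}|)%N).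
pose d := \max_(a | c a != 0) mdeg a.
have deg_le a : c a != 0 -> (mdeg a <= d)%N by move=> ca; apply: leq_bigmax_cond.
have [a0 ca0 def_d] : {a0 | a0 \in [pred a | c a != 0] & d = mdeg a0}.
  by apply: eq_bigmax_cond; apply/card_gt0P; exists a1.
have d_lt : (d < #|F|.-1)%N by rewrite def_d (leq_ltn_trans (mdeg_le a0)).
have homog_eq0 v : meval (homog_part c d) v = 0.
  have [x line_E] := E_kakeya v.
  by apply: meval_homog_line d_lt deg_le _ => s; apply: c_E.
have := meval_eq0_coef m_le homog_eq0 a0; rewrite /homog_part -def_d eqxx => /eqP.
by rewrite (negbTE ca0).
Qed.

Corollary kakeya_set_card_ge_field n (E : {set 'rV[F]_n}) :
  (0 < n)%N -> kakeya_set E -> (#|F| ^ n <= (2 * n) ^ n * #|E|)%N.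
Proof.
move=> n_gt0 E_kakeya; have q_gt1 : (1 < #|F|)%N := finNzRing_gt1 F.
pose m := ((#|F| - 2) %/ n).+1.
have m_le_E : (m ^ n <= #|E|)%N.
  apply: (kakeya_set_card_ge n_gt0 _ E_kakeya).
  by rewrite mulnC (leq_ltn_trans (leq_trunc_div _ _)) //; lia.
have q_le : (#|F| <= 2 * n * m)%N.
  by have := divn_eq (#|F| - 2) n; have := ltn_pmod (#|F| - 2) n_gt0; nia.
apply: leq_trans (_ : (2 * n * m) ^ n <= _)%N; first by rewrite leq_exp2r.
by rewrite expnMn leq_mul2l m_le_E orbT.
Qed.

End Kakeya.

From Stdlib Require Import Reals Lra.

(* From here on, [^] on nat denotes [Nat.pow]; [expn] is written explicitly. *)
Lemma INR_expn a b : INR (expn a b) = (INR a ^ b)%R.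
Proof. by elim: b => //= b IHb; rewrite expnS mult_INR IHb. Qed.

Lemma nk_exponent_le (n k : nat) (eps : R) : (k < n)%N -> (0 <= eps)%R ->
  ((INR k * INR n + INR k + 1) / (INR k + 1) - eps <= INR n)%R.
Proof.
move=> /leP/le_INR; rewrite S_INR => k_lt eps_ge0.
have k_ge0 := pos_INR k.
apply: Rle_trans (_ : (INR k * INR n + INR k + 1) / (INR k + 1) <= _)%R; first lra.
apply: (Rmult_le_reg_r (INR k + 1)); first lra.
by rewrite /Rdiv Rmult_assoc Rinv_l; nra.
Qed.

Theorem mainTheorem2 (n k : nat) :
  (2 <= k)%N -> (k <= n - 2)%N ->
  forall eps : R, (0 < eps)%R ->
  exists C : R, (0 < C)%R /\
    forall (F : finFieldType) (E : {set 'rV[F]_n}),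
      @nk_set F n k E ->
      (/ C * Rpower (INR #|F|)
         ((INR k * INR n + INR k + 1) / (INR k + 1) - eps) <= INR #|E|)%R.
Proof.
move=> k_ge2 k_le eps eps_gt0.
have k_range : (0 < k <= n)%N by apply/andP; split; lia.
have n_gt0 : (0 < n)%N by lia.
have C_gt0 : (0 < INR (expn (2 * n) n))%R by apply/lt_0_INR/ltP; rewrite expn_gt0; lia.
exists (INR (expn (2 * n) n)); split=> // F E E_nk.
have q_ge1 : (1 <= INR #|F|)%R by apply/(le_INR 1)/leP/ltnW/finNzRing_gt1.
have exp_le := nk_exponent_le (ltac:(lia) : (k < n)%N) (Rlt_le _ _ eps_gt0).
apply: (Rmult_le_reg_l _ _ _ C_gt0).
rewrite -Rmult_assoc Rinv_r ?Rmult_1_l; last lra.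
apply: Rle_trans (Rle_Rpower _ _ _ q_ge1 exp_le) _.
rewrite Rpower_pow; last lra.
rewrite -INR_expn -mult_INR; apply/le_INR/leP.
exact: kakeya_set_card_ge_field n_gt0 (nk_set_kakeya k_range E_nk).
Qed.
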